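(* Let $g:[a,b]\to\mathbb R$ be left-continuous and increasing, with $g^C$ being $p$-$H$-Hölder on $[a,b]$ (i.e. $|g^C(x)-g^C(y)|\le H|x-y|^p$ for all $x,y$, with $H>0$, $p\in(0,1]$). Let $f:[a,b]\to\mathbb R$ be $g$-Lipschitz continuous with Lipschitz constant $H$. Then $$\Big|f(a)(g^C(b)-g^C(a))-\int_a^b f(s)\,\mathrm dg^C(s)\Big|\le H^2(b-a)^p(g(b)-g(a)),$$ $$\Big|\tfrac{f(a)+f(b)}{2}(g^C(b)-g^C(a))-\int_a^b f(s)\,\mathrm dg^C(s)\Big|\le H^2\Big(\tfrac{b-a}{2}\Big)^p(g(b)-g(a)),$$ where the integrals are Kurzweil–Stieltjes integrals.
   Context: $\Delta^+g(t)=g(t^+)-g(t)$; the jump part of $g$ is $g^B(t)=\sum_{s\in[a,t)}\Delta^+g(s)$ and its continuous part is $g^C=g-g^B$. $f$ is $g$-Lipschitz continuous with constant $H$ if $|f(t)-f(s)|\le H|g(t)-g(s)|$ for all $t,s\in[a,b]$. *)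

From Stdlib Require Import Reals Lra List ClassicalEpsilon.
Open Scope R_scope.

(* Real power x^p for x >= 0, with the convention 0^p = 0 (p > 0). *)
Definition rpow (x p : R) : R := if Rle_dec x 0 then 0 else Rpower x p.

Definition is_right_lim (g : R -> R) (t l : R) : Prop :=
  forall eps, 0 < eps -> exists d, 0 < d /\
    forall s, t < s < t + d -> Rabs (g s - l) < eps.

(* g(t^+) (chosen classically; meaningful when the right limit exists). *)
Definition right_lim (g : R -> R) (t : R) : R :=
  epsilon (inhabits 0) (fun l => is_right_lim g t l).

Definition jump_plus (g : R -> R) (t : R) : R := right_lim g t - g t.

Definition jump_partial_sums (g : R -> R) (a t : R) (x : R) : Prop :=
  exists l : list R, NoDup l /\ Forall (fun s => a <= s < t) l /\
    x = fold_right Rplus 0 (map (jump_plus g) l).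

(* Jump part g^B(t) = sum_{s in [a,t)} Delta^+ g(s), defined as the supremum
   of the finite partial sums (the sum of a family of nonnegative terms). *)
Definition jump_part (g : R -> R) (a t : R) : R :=
  epsilon (inhabits 0) (fun S => is_lub (jump_partial_sums g a t) S).

Definition cont_part (g : R -> R) (a : R) (t : R) : R := g t - jump_part g a t.

(* Tagged divisions of [a,b] as lists of (left end, tag, right end),
   fine with respect to the gauge delta. *)
Fixpoint fine_tagged_division (delta : R -> R) (a b : R)
    (P : list (R * R * R)) : Prop :=
  match P with
  | nil => a = b
  | (u, tau, v) :: P' =>
      u = a /\ u < v /\ u <= tau <= v /\
      tau - delta tau < u /\ v < tau + delta tau /\
      fine_tagged_division delta v b P'
  end.

Definition RS_sum (f g : R -> R) (P : list (R * R * R)) : R :=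
  fold_right Rplus 0
    (map (fun x => match x with (u, tau, v) => f tau * (g v - g u) end) P).

Definition KS_integral (f g : R -> R) (a b I : R) : Prop :=
  forall eps, 0 < eps -> exists delta : R -> R,
    (forall t, a <= t <= b -> 0 < delta t) /\
    forall P, fine_tagged_division delta a b P ->
      Rabs (RS_sum f g P - I) < eps.

Definition nondecreasing_on (g : R -> R) (a b : R) : Prop :=
  forall x y, a <= x -> x <= y -> y <= b -> g x <= g y.

Definition left_continuous_on (g : R -> R) (a b : R) : Prop :=
  forall t, a < t <= b -> forall eps, 0 < eps -> exists d, 0 < d /\
    forall s, a <= s -> t - d < s <= t -> Rabs (g s - g t) < eps.

Definition holder_on (h : R -> R) (a b H p : R) : Prop :=
  forall x y, a <= x <= b -> a <= y <= b ->
    Rabs (h x - h y) <= H * rpow (Rabs (x - y)) p.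

Definition g_lipschitz_on (f g : R -> R) (a b H : R) : Prop :=
  forall t s, a <= t <= b -> a <= s <= b ->
    Rabs (f t - f s) <= H * Rabs (g t - g s).

From Stdlib Require Import Reals Lra Lia List ClassicalEpsilon Classical.
Import RList.
Open Scope R_scope.

(* Write h = g^C. The jumps of g at finitely many points of [x, y) add up to at most
   g(y) - g(x), so h is nondecreasing, and the Hoelder condition makes it uniformly
   continuous. Comparing two Riemann-Stieltjes sums cell by cell on their common
   refinement, their difference is at most the sum of osc_f(cell) * (increment of h),
   and osc_f <= H * (increment of g); for fine divisions this is small, so the integral
   exists (already with constant gauges). For the estimates, every sum differs from
   C * (h(b) - h(a)) by at most sup |C - f| * (h(b) - h(a)), where
   sup |f(a) - f| <= H (g(b) - g(a)), sup |(f(a) + f(b))/2 - f| <= H (g(b) - g(a)) / 2,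
   h(b) - h(a) <= H (b - a)^p, and (b - a)^p / 2 <= ((b - a) / 2)^p as p <= 1. *)

Definition jump_sum (g : R -> R) (l : list R) : R :=
  fold_right Rplus 0 (map (jump_plus g) l).

Lemma jump_sum_cons g s l : jump_sum g (s :: l) = jump_plus g s + jump_sum g l.
Proof. reflexivity. Qed.

Lemma jump_sum_app g l1 l2 : jump_sum g (l1 ++ l2) = jump_sum g l1 + jump_sum g l2.
Proof.
  induction l1 as [|s l1 IH]; unfold jump_sum in *; simpl; [ring|].
  rewrite IH; ring.
Qed.

Lemma jump_sum_filter g (P : R -> bool) l :
  jump_sum g l = jump_sum g (filter P l) + jump_sum g (filter (fun s => negb (P s)) l).
Proof.
  induction l as [|s l IH]; unfold jump_sum in *; simpl; [ring|].
  destruct (P s); simpl; rewrite IH; ring.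
Qed.

Section JumpPart.
Variables (g : R -> R) (a b : R).
Hypothesis g_mono : nondecreasing_on g a b.

(* The right limit at s is the infimum of g over (s, b]. *)
Lemma nondecreasing_is_right_lim s : a <= s < b -> exists l, is_right_lim g s l.
Proof.
  intros Hs.
  set (E := fun r => exists u, s < u <= b /\ r = - g u).
  assert (HE : exists r, E r) by (exists (- g b), b; split; [lra | reflexivity]).
  assert (HB : bound E).
  { exists (- g s); intros r [u [Hu ->]].
    apply Ropp_le_contravar, g_mono; lra. }
  destruct (completeness E HB HE) as [m [Hub Hlub]].
  exists (- m); intros eps Heps.
  assert (Hnub : ~ is_upper_bound E (m - eps)) by (intro Hc; specialize (Hlub _ Hc); lra).
  apply not_all_ex_not in Hnub as [r Hr].
  apply imply_to_and in Hr as [[u0 [Hu0 ->]] Hr].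
  exists (u0 - s); split; [lra |]; intros u Hu.
  assert (g u <= g u0) by (apply g_mono; lra).
  assert (- g u <= m) by (apply Hub; exists u; split; [lra | reflexivity]).
  apply Rabs_def1; lra.
Qed.

Lemma right_lim_le s t : a <= s -> s < t -> t <= b -> right_lim g s <= g t.
Proof.
  intros Has Hst Htb.
  assert (Hlim : is_right_lim g s (right_lim g s)).
  { apply (epsilon_spec (inhabits 0) (fun l => is_right_lim g s l)).
    apply nondecreasing_is_right_lim; lra. }
  apply Rnot_lt_le; intros Hlt.
  destruct (Hlim (right_lim g s - g t)) as [d [Hd Hnear]]; [lra |].
  set (u := s + Rmin d (t - s) / 2).
  assert (0 < Rmin d (t - s)) by (apply Rmin_glb_lt; lra).
  pose proof (Rmin_l d (t - s)); pose proof (Rmin_r d (t - s)).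
  specialize (Hnear u ltac:(unfold u; lra)); apply Rabs_def2 in Hnear.
  assert (g u <= g t) by (apply g_mono; unfold u; lra).
  lra.
Qed.

Lemma jump_sum_le_increment l x y :
  NoDup l -> (forall s, In s l -> x <= s < y) -> a <= x -> x <= y -> y <= b ->
  jump_sum g l <= g y - g x.
Proof.
  remember (length l) as n eqn:Hn; revert l y Hn.
  induction n as [n IH] using Wf_nat.lt_wf_ind; intros l y -> Hnd Hl Hax Hxy Hyb.
  destruct l as [|s0 l0].
  { assert (g x <= g y) by (apply g_mono; lra). unfold jump_sum; simpl; lra. }
  (* Peel off the largest point m: its jump fits in [g m, g y]. *)
  set (m := MaxRlist (s0 :: l0)).
  assert (Hm : In m (s0 :: l0)) by (apply MaxRlist_P2; exists s0; left; reflexivity).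
  assert (Hmax : forall s, In s (s0 :: l0) -> s <= m) by (intros; apply MaxRlist_P1; assumption).
  destruct (in_split _ _ Hm) as [l1 [l2 Hsplit]].
  rewrite Hsplit in Hnd; apply NoDup_remove in Hnd as [Hnd Hnotin].
  assert (Hrest : jump_sum g (l1 ++ l2) <= g m - g x).
  { apply (IH (length (l1 ++ l2))); auto; try (pose proof (Hl m Hm); lra).
    - rewrite Hsplit, !length_app; simpl; lia.
    - intros s Hs.
      assert (Hin : In s (s0 :: l0)) by (rewrite Hsplit; apply in_app_or in Hs as [|]; apply in_or_app; simpl; tauto).
      pose proof (Hl s Hin); pose proof (Hmax s Hin).
      split; [lra |]; destruct (Rle_lt_or_eq_dec s m); [lra | auto | subst; contradiction]. }
  assert (right_lim g m <= g y) by (pose proof (Hl m Hm); apply right_lim_le; lra).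
  rewrite Hsplit, !jump_sum_app; rewrite jump_sum_app in Hrest.
  rewrite jump_sum_cons; unfold jump_plus at 1; lra.
Qed.

Lemma jump_part_is_lub t : a <= t <= b ->
  is_lub (jump_partial_sums g a t) (jump_part g a t).
Proof.
  intros Ht; unfold jump_part; apply epsilon_spec.
  destruct (completeness (jump_partial_sums g a t)) as [S HS]; [| | exists S; exact HS].
  - exists (g t - g a); intros z [l [Hnd [Hl ->]]].
    rewrite Forall_forall in Hl; apply jump_sum_le_increment; auto; lra.
  - exists 0, nil; repeat constructor.
Qed.

Lemma jump_part_le_increment x y : a <= x -> x <= y -> y <= b ->
  jump_part g a y <= jump_part g a x + (g y - g x).
Proof.
  intros Hax Hxy Hyb.
  destruct (jump_part_is_lub x ltac:(lra)) as [Hub _].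
  destruct (jump_part_is_lub y ltac:(lra)) as [_ Hlub].
  apply Hlub; intros z [l [Hnd [Hl ->]]]; rewrite Forall_forall in Hl.
  set (before_x := fun s => if Rlt_dec s x then true else false).
  fold (jump_sum g l); rewrite (jump_sum_filter g before_x l).
  apply Rplus_le_compat.
  - apply Hub; exists (filter before_x l).
    split; [apply NoDup_filter; assumption | split; [| reflexivity]].
    rewrite Forall_forall; intros s Hs; apply filter_In in Hs as [Hs Hsx].
    unfold before_x in Hsx; destruct (Rlt_dec s x); [| discriminate].
    pose proof (Hl s Hs); lra.
  - apply jump_sum_le_increment; try lra; [apply NoDup_filter; assumption |].
    intros s Hs; apply filter_In in Hs as [Hs Hsx].
    unfold before_x in Hsx; destruct (Rlt_dec s x); [discriminate |].
    pose proof (Hl s Hs); lra.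
Qed.

Lemma cont_part_nondecreasing : nondecreasing_on (cont_part g a) a b.
Proof.
  intros x y Hax Hxy Hyb; unfold cont_part.
  pose proof (jump_part_le_increment x y Hax Hxy Hyb); lra.
Qed.

End JumpPart.

Fixpoint tagged_chain (c b : R) (P : list (R * R * R)) : Prop :=
  match P with
  | nil => c = b
  | (u, t, v) :: P' => u = c /\ u < v /\ u <= t <= v /\ tagged_chain v b P'
  end.

Lemma tagged_chain_le c b P : tagged_chain c b P -> c <= b.
Proof.
  revert c; induction P as [|[[u t] v] P IH]; simpl; intros c HP; [lra |].
  destruct HP as [-> [Huv [_ HP]]]; apply IH in HP; lra.
Qed.

Lemma fine_tagged_chain d c b P : fine_tagged_division d c b P -> tagged_chain c b P.
Proof.
  revert c; induction P as [|[[u t] v] P IH]; simpl; intros c HP; [assumption |].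
  destruct HP as [-> [Huv [Ht [_ [_ HP]]]]]; auto.
Qed.

Lemma fine_tagged_division_app d a x y P Q :
  fine_tagged_division d a x P -> fine_tagged_division d x y Q ->
  fine_tagged_division d a y (P ++ Q).
Proof.
  revert a; induction P as [|[[u t] v] P IH]; simpl; intros a HP HQ.
  - subst; assumption.
  - destruct HP as [H1 [H2 [H3 [H4 [H5 H6]]]]]; repeat split; eauto; lra.
Qed.

Lemma fine_tagged_division_gauge_le d d' a b P : (forall t, d t <= d' t) ->
  fine_tagged_division d a b P -> fine_tagged_division d' a b P.
Proof.
  intros Hdd'; revert a; induction P as [|[[u t] v] P IH]; simpl; intros a HP; [assumption |].
  destruct HP as [H1 [H2 [H3 [H4 [H5 H6]]]]]; specialize (Hdd' t).
  repeat split; auto; lra.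
Qed.

(* Cousin's lemma: the supremum of the reachable right endpoints is reachable and equals b. *)
Lemma cousin d a b : a < b -> (forall t, a <= t <= b -> 0 < d t) ->
  exists P, fine_tagged_division d a b P.
Proof.
  intros Hab Hd.
  set (E := fun x => a <= x <= b /\ exists P, fine_tagged_division d a x P).
  assert (Ea : E a) by (split; [lra | exists nil; reflexivity]).
  destruct (completeness E) as [s [Hub Hlub]]; [exists b; intros x [Hx _]; lra | exists a; exact Ea |].
  assert (Has : a <= s) by (apply Hub, Ea).
  assert (Hsb : s <= b) by (apply Hlub; intros x [Hx _]; lra).
  assert (Hds : 0 < d s) by (apply Hd; lra).
  assert (Es : E s).
  { assert (Hnub : ~ is_upper_bound E (s - d s)) by (intro Hc; specialize (Hlub _ Hc); lra).
    apply not_all_ex_not in Hnub as [x Hx]; apply imply_to_and in Hx as [Ex Hx].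
    assert (Hxs : x <= s) by (apply Hub, Ex).
    destruct Ex as [Hx' [P HP]]; split; [lra |].
    destruct (Rle_lt_or_eq_dec x s Hxs) as [Hlt | <-]; [| exists P; exact HP].
    exists (P ++ (x, s, s) :: nil); eapply fine_tagged_division_app; [exact HP |].
    simpl; repeat split; lra. }
  destruct (Rle_lt_or_eq_dec s b Hsb) as [Hlt | <-]; [exfalso | apply Es].
  destruct Es as [_ [P HP]].
  set (y := Rmin b (s + d s / 2)).
  assert (y <= b) by apply Rmin_l; assert (y <= s + d s / 2) by apply Rmin_r.
  assert (s < y) by (apply Rmin_glb_lt; lra).
  assert (Ey : E y).
  { split; [lra |]; exists (P ++ (s, s, y) :: nil).
    eapply fine_tagged_division_app; [exact HP |]; simpl; repeat split; lra. }
  specialize (Hub _ Ey); lra.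
Qed.

Definition osc_sum (osc : R -> R -> R) (h : R -> R) (P : list (R * R * R)) : R :=
  fold_right Rplus 0
    (map (fun x => match x with (u, _, v) => osc u v * (h v - h u) end) P).

Lemma RS_sum_cons f h u t v P :
  RS_sum f h ((u, t, v) :: P) = f t * (h v - h u) + RS_sum f h P.
Proof. reflexivity. Qed.

Lemma osc_sum_cons osc h u t v P :
  osc_sum osc h ((u, t, v) :: P) = osc u v * (h v - h u) + osc_sum osc h P.
Proof. reflexivity. Qed.

Section RSSumEstimates.
Variables (f h : R -> R) (a b : R).
Hypothesis h_mono : nondecreasing_on h a b.

Lemma RS_sum_dev_le C K c P : a <= c -> tagged_chain c b P ->
  (forall t, a <= t <= b -> Rabs (C - f t) <= K) ->
  Rabs (C * (h b - h c) - RS_sum f h P) <= K * (h b - h c).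
Proof.
  intros Hac HP HK; revert c Hac HP; induction P as [|[[u t] v] P IH]; intros c Hac HP.
  - simpl in HP; subst; unfold RS_sum; simpl.
    rewrite Rminus_diag, Rmult_0_r, Rminus_0_r, Rabs_R0; lra.
  - destruct HP as [<- [Huv [Ht HP]]]; pose proof (tagged_chain_le _ _ _ HP).
    specialize (IH v ltac:(lra) HP); rewrite RS_sum_cons.
    assert (h u <= h v) by (apply h_mono; lra).
    assert (Rabs (C - f t) * (h v - h u) <= K * (h v - h u))
      by (apply Rmult_le_compat_r; [lra | apply HK; lra]).
    replace (C * (h b - h u) - (f t * (h v - h u) + RS_sum f h P))
      with ((C - f t) * (h v - h u) + (C * (h b - h v) - RS_sum f h P)) by ring.
    eapply Rle_trans; [apply Rabs_triang |].
    rewrite Rabs_mult, (Rabs_pos_eq (h v - h u)) by lra; lra.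
Qed.

Lemma tag_diff_mul_le t s c x al be :
  a <= c -> c <= x -> x <= b ->
  Rabs (f t - f c) <= al -> Rabs (f s - f c) <= be ->
  Rabs ((f t - f s) * (h x - h c)) <= (al + be) * (h x - h c).
Proof.
  intros Hac Hcx Hxb Ht Hs.
  assert (h c <= h x) by (apply h_mono; lra).
  rewrite Rabs_mult, (Rabs_pos_eq (h x - h c)) by lra.
  apply Rmult_le_compat_r; [lra |].
  replace (f t - f s) with ((f t - f c) - (f s - f c)) by ring.
  eapply Rle_trans; [apply Rabs_triang |]; rewrite Rabs_Ropp; lra.
Qed.

Variable osc : R -> R -> R.
Hypothesis osc_bound : forall u t v x, a <= u -> u <= t <= v -> v <= b -> u <= x <= v ->
  Rabs (f t - f x) <= osc u v.

(* Two divisions that have both reached c: their current cells are [c,v] and [c,w],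
   on which f stays within al of f t and within be of f s. *)
Definition merge_claim c t v al P s w be Q : Prop :=
  a <= c -> c <= v -> c <= w -> tagged_chain v b P -> tagged_chain w b Q ->
  (forall x, c <= x <= v -> Rabs (f t - f x) <= al) ->
  (forall x, c <= x <= w -> Rabs (f s - f x) <= be) ->
  Rabs (RS_sum f h ((c, t, v) :: P) - RS_sum f h ((c, s, w) :: Q))
    <= al * (h v - h c) + osc_sum osc h P + (be * (h w - h c) + osc_sum osc h Q).

Lemma merge_claim_sym c t v al P s w be Q :
  merge_claim c s w be Q t v al P -> merge_claim c t v al P s w be Q.
Proof.
  intros Hsym Hac Hcv Hcw HP HQ Ht Hs.
  rewrite Rabs_minus_sym; eapply Rle_trans; [apply Hsym; assumption | lra].
Qed.

(* Close the cell that ends first and recurse from its right end. *)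
Lemma merge_claim_step c t v al P s w be Q : v <= w ->
  (forall c' t' v' al' P' s' w' be' Q',
     (length P' + length Q' < length P + length Q)%nat ->
     merge_claim c' t' v' al' P' s' w' be' Q') ->
  merge_claim c t v al P s w be Q.
Proof.
  intros Hvw IH Hac Hcv Hcw HP HQ Ht Hs.
  assert (Hcell : Rabs ((f t - f s) * (h v - h c)) <= (al + be) * (h v - h c)).
  { pose proof (tagged_chain_le _ _ _ HQ).
    apply tag_diff_mul_le; try apply Ht; try apply Hs; lra. }
  destruct P as [|[[u1 t1] v1] P1].
  - simpl in HP; subst v.
    destruct Q as [|[[u2 t2] v2] Q1].
    + simpl in HQ; subst w; rewrite !RS_sum_cons; unfold RS_sum, osc_sum; simpl.
      replace (f t * (h b - h c) + 0 - (f s * (h b - h c) + 0))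
        with ((f t - f s) * (h b - h c)) by ring; lra.
    + destruct HQ as [-> [Hv2 [_ HQ1]]]; pose proof (tagged_chain_le _ _ _ HQ1); lra.
  - destruct HP as [-> [Hv1 [Ht1 HP1]]]; pose proof (tagged_chain_le _ _ _ HP1).
    pose proof (IH v t1 v1 (osc v v1) P1 s w be Q ltac:(simpl; lia)
      ltac:(lra) ltac:(lra) Hvw HP1 HQ
      ltac:(intros; apply osc_bound; lra) ltac:(intros; apply Hs; lra)) as Hrest.
    rewrite !RS_sum_cons in *; rewrite osc_sum_cons.
    replace (f t * (h v - h c) + (f t1 * (h v1 - h v) + RS_sum f h P1)
               - (f s * (h w - h c) + RS_sum f h Q))
      with ((f t - f s) * (h v - h c) + (f t1 * (h v1 - h v) + RS_sum f h P1
               - (f s * (h w - h v) + RS_sum f h Q))) by ring.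
    eapply Rle_trans; [apply Rabs_triang | lra].
Qed.

Lemma RS_sum_merge c t v al P s w be Q : merge_claim c t v al P s w be Q.
Proof.
  remember (length P + length Q)%nat as n eqn:Hn.
  revert c t v al P s w be Q Hn; induction n as [n IH] using Wf_nat.lt_wf_ind.
  intros c t v al P s w be Q ->.
  destruct (Rle_or_lt v w) as [Hvw | Hwv].
  - apply merge_claim_step; [assumption |]; intros; eapply IH; [eassumption | reflexivity].
  - apply merge_claim_sym, merge_claim_step; [lra |].
    intros; eapply IH; [rewrite Nat.add_comm; eassumption | reflexivity].
Qed.

Lemma RS_sum_diff_le P Q : a < b -> tagged_chain a b P -> tagged_chain a b Q ->
  Rabs (RS_sum f h P - RS_sum f h Q) <= osc_sum osc h P + osc_sum osc h Q.
Proof.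
  intros Hab HP HQ.
  destruct P as [|[[u1 t1] v1] P1]; [simpl in HP; lra |].
  destruct Q as [|[[u2 t2] v2] Q1]; [simpl in HQ; lra |].
  destruct HP as [-> [Hv1 [Ht1 HP1]]]; destruct HQ as [-> [Hv2 [Ht2 HQ1]]].
  pose proof (tagged_chain_le _ _ _ HP1); pose proof (tagged_chain_le _ _ _ HQ1).
  rewrite !osc_sum_cons.
  apply (RS_sum_merge a t1 v1 (osc a v1) P1 t2 v2 (osc a v2) Q1); auto; try lra;
    intros; apply osc_bound; lra.
Qed.

End RSSumEstimates.

Definition small_increments (h : R -> R) (a b d eps : R) : Prop :=
  forall u v, a <= u -> u <= v -> v <= b -> v - u < d -> h v - h u <= eps.

Lemma osc_sum_fine_le (g h : R -> R) (a b H d eps c : R) P :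
  0 <= H -> nondecreasing_on g a b -> nondecreasing_on h a b ->
  small_increments h a b d eps -> a <= c ->
  fine_tagged_division (fun _ => d / 2) c b P ->
  osc_sum (fun u v => H * (g v - g u)) h P <= H * eps * (g b - g c).
Proof.
  intros HH Hg Hh Hinc; revert c; induction P as [|[[u t] v] P IH]; intros c Hac HP.
  - simpl in HP; subst; unfold osc_sum; simpl; lra.
  - destruct HP as [<- [Huv [Ht [Hleft [Hright HP]]]]].
    pose proof (tagged_chain_le _ _ _ (fine_tagged_chain _ _ _ _ HP)).
    specialize (IH v ltac:(lra) HP); rewrite osc_sum_cons.
    assert (h v - h u <= eps) by (apply Hinc; lra).
    assert (h u <= h v) by (apply Hh; lra).
    assert (g u <= g v) by (apply Hg; lra).
    assert (H * (g v - g u) * (h v - h u) <= H * (g v - g u) * eps)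
      by (apply Rmult_le_compat_l; [apply Rmult_le_pos |]; lra).
    lra.
Qed.

Lemma g_lipschitz_osc (f g : R -> R) (a b H u t v x : R) :
  0 <= H -> nondecreasing_on g a b -> g_lipschitz_on f g a b H ->
  a <= u -> u <= t <= v -> v <= b -> u <= x <= v ->
  Rabs (f t - f x) <= H * (g v - g u).
Proof.
  intros HH Hg Hf Hau Ht Hvb Hx.
  eapply Rle_trans; [apply Hf; lra | apply Rmult_le_compat_l; [assumption |]].
  assert (g u <= g t) by (apply Hg; lra); assert (g t <= g v) by (apply Hg; lra).
  assert (g u <= g x) by (apply Hg; lra); assert (g x <= g v) by (apply Hg; lra).
  unfold Rabs; destruct (Rcase_abs (g t - g x)); lra.
Qed.

Lemma RS_sum_cauchy (f g h : R -> R) (a b H : R) :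
  a < b -> 0 <= H -> nondecreasing_on g a b -> nondecreasing_on h a b ->
  g_lipschitz_on f g a b H ->
  (forall eps, 0 < eps -> exists d, 0 < d /\ small_increments h a b d eps) ->
  forall eps, 0 < eps -> exists d, 0 < d /\ forall P Q,
    fine_tagged_division (fun _ => d) a b P -> fine_tagged_division (fun _ => d) a b Q ->
    Rabs (RS_sum f h P - RS_sum f h Q) <= eps.
Proof.
  intros Hab HH Hg Hh Hf Hunif eps Heps.
  set (D := g b - g a).
  assert (HD : 0 <= D) by (unfold D; assert (g a <= g b) by (apply Hg; lra); lra).
  set (e := eps / (2 * H * D + 1)).
  assert (He : 0 < e) by (unfold e; apply Rdiv_lt_0_compat; nra).
  assert (HeD : 2 * H * e * D <= eps).
  { assert (Hmul : e * (2 * H * D + 1) = eps) by (unfold e; field; nra). nra. }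
  destruct (Hunif e He) as [d [Hd Hinc]].
  exists (d / 2); split; [lra |]; intros P Q HP HQ.
  pose proof (osc_sum_fine_le g h a b H d e a P HH Hg Hh Hinc (Rle_refl a) HP).
  pose proof (osc_sum_fine_le g h a b H d e a Q HH Hg Hh Hinc (Rle_refl a) HQ).
  eapply Rle_trans.
  - apply (RS_sum_diff_le f h a b Hh (fun u v => H * (g v - g u))); auto;
      [intros; eapply g_lipschitz_osc; eauto | eapply fine_tagged_chain; eauto ..].
  - unfold D in HeD; lra.
Qed.

Lemma KS_integral_of_cauchy (f h : R -> R) (a b : R) : a < b ->
  (forall eps, 0 < eps -> exists d, 0 < d /\ forall P Q,
     fine_tagged_division (fun _ => d) a b P -> fine_tagged_division (fun _ => d) a b Q ->
     Rabs (RS_sum f h P - RS_sum f h Q) <= eps) ->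
  exists I, KS_integral f h a b I.
Proof.
  intros Hab Hcauchy.
  set (Pn := fun n : nat => epsilon (inhabits nil)
               (fun P => fine_tagged_division (fun _ => / INR (S n)) a b P)).
  assert (Pn_fine : forall n, fine_tagged_division (fun _ => / INR (S n)) a b (Pn n)).
  { intros n; apply (epsilon_spec (inhabits nil)
      (fun P => fine_tagged_division (fun _ => / INR (S n)) a b P)).
    apply cousin; [assumption |]; intros.
    apply Rinv_0_lt_compat, lt_0_INR; lia. }
  assert (Pn_eventually_fine : forall d, 0 < d -> exists N, forall n, (N <= n)%nat ->
            fine_tagged_division (fun _ => d) a b (Pn n)).
  { intros d Hd; destruct (archimed_cor1 d Hd) as [N [HN HN0]].
    exists N; intros n Hn; apply (fine_tagged_division_gauge_le (fun _ => / INR (S n)));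
      [intros _ | apply Pn_fine].
    assert (/ INR (S n) <= / INR N)
      by (apply Rinv_le_contravar; [apply lt_0_INR | apply le_INR]; lia).
    lra. }
  set (Un := fun n => RS_sum f h (Pn n)).
  assert (HUn : Cauchy_crit Un).
  { intros eps Heps; destruct (Hcauchy (eps / 2) ltac:(lra)) as [d [Hd Hclose]].
    destruct (Pn_eventually_fine d Hd) as [N HN].
    exists N; intros n m Hn Hm; unfold R_dist, Un.
    pose proof (Hclose _ _ (HN n Hn) (HN m Hm)); lra. }
  destruct (R_complete Un HUn) as [I HI].
  exists I; intros eps Heps.
  destruct (Hcauchy (eps / 2) ltac:(lra)) as [d [Hd Hclose]].
  destruct (Pn_eventually_fine d Hd) as [N1 HN1].
  destruct (HI (eps / 2) ltac:(lra)) as [N2 HN2].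
  exists (fun _ => d); split; [intros; assumption |]; intros P HP.
  set (n := Nat.max N1 N2).
  pose proof (Hclose _ _ HP (HN1 n ltac:(lia))).
  specialize (HN2 n ltac:(lia)); unfold R_dist, Un in HN2.
  replace (RS_sum f h P - I) with ((RS_sum f h P - RS_sum f h (Pn n)) + (RS_sum f h (Pn n) - I))
    by ring.
  eapply Rle_lt_trans; [apply Rabs_triang | lra].
Qed.

Lemma KS_integral_dev_le (f h : R -> R) (a b I C K : R) :
  a < b -> nondecreasing_on h a b -> KS_integral f h a b I ->
  (forall t, a <= t <= b -> Rabs (C - f t) <= K) ->
  Rabs (C * (h b - h a) - I) <= K * (h b - h a).
Proof.
  intros Hab Hh HI HK; apply Rle_plus_epsilon; intros eps Heps.
  destruct (HI eps Heps) as [d [Hd Hclose]].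
  destruct (cousin d a b Hab Hd) as [P HP].
  pose proof (Hclose P HP).
  pose proof (RS_sum_dev_le f h a b Hh C K a P (Rle_refl a) (fine_tagged_chain _ _ _ _ HP) HK).
  replace (C * (h b - h a) - I)
    with ((C * (h b - h a) - RS_sum f h P) + (RS_sum f h P - I)) by ring.
  eapply Rle_trans; [apply Rabs_triang | lra].
Qed.

Lemma g_lipschitz_midpoint_dev (f g : R -> R) (a b H t : R) :
  0 <= H -> nondecreasing_on g a b -> g_lipschitz_on f g a b H -> a <= t <= b ->
  Rabs ((f a + f b) / 2 - f t) <= H * (g b - g a) / 2.
Proof.
  intros HH Hg Hf Ht.
  pose proof (g_lipschitz_osc f g a b H a a t t HH Hg Hf ltac:(lra) ltac:(lra) ltac:(lra) ltac:(lra)).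
  pose proof (g_lipschitz_osc f g a b H t b b t HH Hg Hf ltac:(lra) ltac:(lra) ltac:(lra) ltac:(lra)).
  replace ((f a + f b) / 2 - f t) with (((f a - f t) + (f b - f t)) / 2) by field.
  unfold Rdiv; rewrite Rabs_mult, (Rabs_pos_eq (/ 2)) by lra.
  pose proof (Rabs_triang (f a - f t) (f b - f t)); lra.
Qed.

Lemma holder_small_increments (h : R -> R) (a b H p : R) :
  0 < H -> 0 < p -> holder_on h a b H p ->
  forall eps, 0 < eps -> exists d, 0 < d /\ small_increments h a b d eps.
Proof.
  intros HH Hp Hhol eps Heps.
  set (d := Rpower (eps / H) (/ p)).
  assert (Hd : 0 < d) by (unfold d, Rpower; apply exp_pos).
  exists d; split; [assumption |]; intros u v Hau Huv Hvb Hvu.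
  eapply Rle_trans; [apply Rle_abs |].
  eapply Rle_trans; [apply Hhol; lra |].
  rewrite Rabs_pos_eq by lra; unfold rpow; destruct (Rle_dec (v - u) 0); [lra |].
  assert (Hpow : Rpower (v - u) p < Rpower d p) by (apply Rlt_Rpower_l; lra).
  unfold d in Hpow; rewrite Rpower_mult, Rinv_l, Rpower_1 in Hpow by (try apply Rdiv_lt_0_compat; lra).
  apply (Rmult_lt_compat_l H) in Hpow; [| assumption].
  replace (H * (eps / H)) with eps in Hpow by (field; lra); lra.
Qed.

Lemma holder_increment_le (h : R -> R) (a b H p : R) :
  a <= b -> holder_on h a b H p -> h b - h a <= H * rpow (b - a) p.
Proof.
  intros Hab Hhol; pose proof (Hhol b a ltac:(lra) ltac:(lra)) as Hba.
  rewrite (Rabs_pos_eq (b - a)) in Hba by lra.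
  eapply Rle_trans; [apply Rle_abs | exact Hba].
Qed.

Lemma rpow_half_le x p : 0 < x -> 0 < p <= 1 -> rpow x p / 2 <= rpow (x / 2) p.
Proof.
  intros Hx Hp; unfold rpow.
  destruct (Rle_dec x 0); [lra |]; destruct (Rle_dec (x / 2) 0); [lra |].
  assert (Hsplit : Rpower x p = Rpower (x / 2) p * Rpower 2 p)
    by (rewrite Rpower_mult_distr by lra; f_equal; field).
  assert (Rpower 2 p <= 2) by (rewrite <- (Rpower_1 2) at 2 by lra; apply Rle_Rpower; lra).
  assert (0 < Rpower (x / 2) p) by (unfold Rpower; apply exp_pos).
  nra.
Qed.

Theorem mainTheorem3 (a b H p : R) (f g : R -> R) :
  a < b -> 0 < H -> 0 < p <= 1 ->
  nondecreasing_on g a b ->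
  left_continuous_on g a b ->
  holder_on (cont_part g a) a b H p ->
  g_lipschitz_on f g a b H ->
  (exists I, KS_integral f (cont_part g a) a b I) /\
  (forall I, KS_integral f (cont_part g a) a b I ->
     Rabs (f a * (cont_part g a b - cont_part g a a) - I)
       <= H ^ 2 * rpow (b - a) p * (g b - g a) /\
     Rabs ((f a + f b) / 2 * (cont_part g a b - cont_part g a a) - I)
       <= H ^ 2 * rpow ((b - a) / 2) p * (g b - g a)).
Proof.
  intros Hab HH Hp Hg _ Hhol Hf.
  pose proof (cont_part_nondecreasing g a b Hg) as Hh.
  set (h := cont_part g a) in *.
  assert (Hgab : g a <= g b) by (apply Hg; lra).
  pose proof (holder_increment_le h a b H p ltac:(lra) Hhol) as Hhb.
  split.
  - apply KS_integral_of_cauchy; [assumption |].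
    apply (RS_sum_cauchy f g h a b H); try assumption; [lra |].
    apply (holder_small_increments h a b H p); [assumption | lra | assumption].
  - intros I HI; split.
    + eapply Rle_trans.
      * apply (KS_integral_dev_le f h a b I (f a) (H * (g b - g a))); try assumption.
        intros t Ht; apply (g_lipschitz_osc f g a b H a a b t); auto; lra.
      * replace (H ^ 2 * rpow (b - a) p * (g b - g a))
          with (H * (g b - g a) * (H * rpow (b - a) p)) by ring.
        apply Rmult_le_compat_l; [nra | exact Hhb].
    + eapply Rle_trans.
      * apply (KS_integral_dev_le f h a b I _ (H * (g b - g a) / 2)); try assumption.
        intros t Ht; apply g_lipschitz_midpoint_dev; auto; lra.
      * pose proof (rpow_half_le (b - a) p ltac:(lra) Hp) as Hhalf.
        replace (H ^ 2 * rpow ((b - a) / 2) p * (g b - g a))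
          with (H * (g b - g a) * H * rpow ((b - a) / 2) p) by ring.
        apply (Rle_trans _ (H * (g b - g a) / 2 * (H * rpow (b - a) p))).
        -- apply Rmult_le_compat_l; [nra | exact Hhb].
        -- apply (Rmult_le_compat_l (H * (g b - g a) * H)) in Hhalf; [lra | nra].
Qed.
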